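(* There exist a decreasing gap asymptotically dense set $\Lambda\subset[0,+\infty)$ and a function $f\in C_0^+(\mathbb{R})$ such that $[0,1]\subset D(f,\Lambda)$ and $[4,5]\subset C(f,\Lambda)$.
   Context: For a discrete set $\Lambda\subset[0,\infty)$ and measurable $f:\mathbb{R}\to[0,+\infty)$, put $s(x)=\sum_{\lambda\in\Lambda}f(x+\lambda)$, $C(f,\Lambda)=\{x: s(x)<\infty\}$ and $D(f,\Lambda)=\{x: s(x)=\infty\}$. An unbounded infinite discrete set $\Lambda=\{\lambda_1<\lambda_2<\cdots\}$ is a decreasing gap asymptotically dense set if the gaps $d_n=\lambda_n-\lambda_{n-1}$ tend to $0$ monotone decreasingly. $C_0^+(\mathbb{R})$ denotes the set of continuous functions $\mathbb{R}\to[0,+\infty)$ tending to $0$ at $+\infty$. *)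

From Stdlib Require Import Reals.
Open Scope R_scope.

(* A discrete set Lambda = {lam 0 < lam 1 < ...} subset [0,oo), given by its
   increasing enumeration. Decreasing gap asymptotically dense: unbounded,
   gaps d_n = lam (n+1) - lam n are monotonically nonincreasing and tend to 0. *)
Definition dgad_set (lam : nat -> R) : Prop :=
  0 <= lam 0%nat /\
  (forall n, lam n < lam (S n)) /\
  (forall M, exists n, M < lam n) /\
  (forall n, lam (S (S n)) - lam (S n) <= lam (S n) - lam n) /\
  Un_cv (fun n => lam (S n) - lam n) 0.

Definition C0plus (f : R -> R) : Prop :=
  continuity f /\ (forall x, 0 <= f x) /\
  (forall eps, 0 < eps -> exists M, forall x, M < x -> f x < eps).

Definition conv_set (f : R -> R) (lam : nat -> R) (x : R) : Prop :=
  exists l, infinite_sum (fun n => f (x + lam n)) l.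

Definition div_set (f : R -> R) (lam : nat -> R) (x : R) : Prop :=
  ~ conv_set f lam x.

From Stdlib Require Import Reals Lra Lia Psatz Classical.
Open Scope R_scope.

(* Let g(t) = exp(-t^2), let Lambda be the orbit of 1 under t |-> t + g(t),
   so that the gaps are d_(n+1) = g(lam_n), and let f(t) = g(t - 1).
   For x in [0,1], f(x + lam_n) >= g(lam_n), so the partial sums of s(x)
   dominate lam_N - 1, which is unbounded.  For y in [4,5],
   f(y + lam_n) <= g(lam_n + 3) = g(lam_n) exp(-6 lam_n - 9), which is at most
   g(lam_n) / (lam_n lam_(n+1)) = 1/lam_n - 1/lam_(n+1), so s(y) is dominated
   by a telescoping series. *)

Lemma not_summable_of_telescoping_minorant (F u : nat -> R) :
  (forall n, u (S n) - u n <= F n) -> (forall M, exists n, M < u n) ->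
  ~ exists l, infinite_sum F l.
Proof.
  intros HF Hu [l Hl].
  assert (Hsum : forall N, u (S N) - u O <= sum_f_R0 F N).
  { induction N as [|N IH]; simpl; [apply HF|].
    specialize (HF (S N)); lra. }
  destruct (cauchy_bound _ (CV_Cauchy _ (exist _ l Hl))) as [m Hm].
  destruct (Hu (Rabs m + u O)) as [[|n] Hn].
  - pose proof (Rabs_pos m); lra.
  - pose proof (Rle_abs m).
    pose proof (Hm (sum_f_R0 F n) (ex_intro _ n eq_refl)).
    specialize (Hsum n); lra.
Qed.

Lemma summable_of_telescoping_majorant (F u : nat -> R) (m : R) :
  (forall n, 0 <= F n) -> (forall n, F n <= u n - u (S n)) ->
  (forall n, m <= u n) -> exists l, infinite_sum F l.
Proof.
  intros HF0 HF Hu.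
  assert (Hsum : forall N, sum_f_R0 F N <= u O - u (S N)).
  { induction N as [|N IH]; simpl; [apply HF|].
    specialize (HF (S N)); lra. }
  destruct (growing_cv (sum_f_R0 F)) as [l Hl].
  - intro n; simpl; specialize (HF0 (S n)); lra.
  - exists (u O - m); intros s [n ->].
    specialize (Hsum n); specialize (Hu (S n)); lra.
  - now exists l.
Qed.

Section Orbit.

Variables (g : R -> R) (a : R).
Hypothesis g_pos : forall t, 0 < g t.
Hypothesis g_antimono : forall s t, a <= s <= t -> g t <= g s.

Fixpoint orbit (n : nat) : R :=
  match n with
  | O => a
  | S k => orbit k + g (orbit k)
  end.

Lemma orbit_gap n : orbit (S n) - orbit n = g (orbit n).
Proof. simpl; ring. Qed.

Lemma orbit_lt_S n : orbit n < orbit (S n).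
Proof. specialize (g_pos (orbit n)); simpl; lra. Qed.

Lemma orbit_le (m n : nat) : (m <= n)%nat -> orbit m <= orbit n.
Proof.
  induction 1 as [|n _ IH]; [lra|].
  specialize (orbit_lt_S n); lra.
Qed.

Lemma orbit_ge n : a <= orbit n.
Proof. apply (orbit_le O n); lia. Qed.

Lemma orbit_unbounded M : exists n, M < orbit n.
Proof.
  apply NNPP; intro Hnot.
  assert (Hle : forall n, orbit n <= M).
  { intro n; apply Rnot_lt_le; intro Hn; apply Hnot; now exists n. }
  assert (Hgap : forall n, g M <= orbit (S n) - orbit n).
  { intro n; rewrite orbit_gap; apply g_antimono.
    split; [apply orbit_ge | apply Hle]. }
  assert (Hlin : forall n, a + INR n * g M <= orbit n).
  { induction n as [|n IH]; [simpl; lra|].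
    rewrite S_INR; specialize (Hgap n); lra. }
  destruct (INR_archimed (g M) (M - a) (g_pos M)) as [n Hn].
  specialize (Hlin n); specialize (Hle n); lra.
Qed.

Lemma orbit_gap_nonincreasing n :
  orbit (S (S n)) - orbit (S n) <= orbit (S n) - orbit n.
Proof.
  rewrite !orbit_gap; apply g_antimono.
  split; [apply orbit_ge | left; apply orbit_lt_S].
Qed.

Lemma orbit_gap_cv0 :
  (forall eps, 0 < eps -> exists M, forall t, M < t -> g t < eps) ->
  Un_cv (fun n => orbit (S n) - orbit n) 0.
Proof.
  intros g_lim eps Heps.
  destruct (g_lim eps Heps) as [M HM].
  destruct (orbit_unbounded M) as [N HN].
  exists N; intros n Hn; unfold Rdist.
  rewrite Rminus_0_r, orbit_gap, Rabs_pos_eq by (left; apply g_pos).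
  apply HM; specialize (orbit_le N n Hn); lra.
Qed.

Lemma dgad_orbit :
  0 <= a -> (forall eps, 0 < eps -> exists M, forall t, M < t -> g t < eps) ->
  dgad_set orbit.
Proof.
  intros a_ge0 g_lim.
  repeat split.
  - exact a_ge0.
  - exact orbit_lt_S.
  - exact orbit_unbounded.
  - exact orbit_gap_nonincreasing.
  - exact (orbit_gap_cv0 g_lim).
Qed.

End Orbit.

Definition gauss (t : R) : R := exp (- (t * t)).

Lemma gauss_pos t : 0 < gauss t.
Proof. apply exp_pos. Qed.

Lemma gauss_le (s t : R) : s * s <= t * t -> gauss t <= gauss s.
Proof.
  intros [Hlt|Heq]; unfold gauss; [left; apply exp_increasing; lra|].
  rewrite Heq; lra.
Qed.

Lemma gauss_lt_eventually eps :
  0 < eps -> exists M, forall t, M < t -> gauss t < eps.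
Proof.
  intro Heps; exists (Rmax 1 (- ln eps)); intros t Ht.
  pose proof (Rmax_l 1 (- ln eps)); pose proof (Rmax_r 1 (- ln eps)).
  unfold gauss; rewrite <- (exp_ln eps Heps); apply exp_increasing; nra.
Qed.

Lemma C0plus_gauss_shift c : C0plus (fun t => gauss (t - c)).
Proof.
  repeat split.
  - unfold gauss; apply derivable_continuous; reg.
  - intro t; left; apply gauss_pos.
  - intros eps Heps.
    destruct (gauss_lt_eventually eps Heps) as [M HM].
    exists (M + c); intros t Ht; apply HM; lra.
Qed.

Lemma gauss_le_shift (x a : R) :
  0 <= x <= 1 -> 1 <= a -> gauss a <= gauss (x + a - 1).
Proof. intros Hx Ha; apply gauss_le; nra. Qed.

Lemma gauss_shift_le_inv_gap (y a : R) :
  4 <= y -> 1 <= a -> gauss (y + a - 1) <= / a - / (a + gauss a).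
Proof.
  intros Hy Ha.
  set (g := gauss a).
  assert (Hg : 0 < g <= 1).
  { split; [apply gauss_pos|].
    apply Rle_trans with (gauss 0); [apply gauss_le; nra|].
    unfold gauss; rewrite Rmult_0_l, Ropp_0, exp_0; lra. }
  assert (Hshift : gauss (y + a - 1) <= g * exp (- (6 * a + 9))).
  { unfold g, gauss; rewrite <- exp_plus.
    replace (- (a * a) + - (6 * a + 9)) with (- ((a + 3) * (a + 3))) by ring.
    apply gauss_le; nra. }
  assert (Hexp : a * (a + g) <= exp (6 * a + 9)).
  { assert (Ha2 : (1 + a) * (1 + a) <= exp (a + a)).
    { rewrite exp_plus; specialize (exp_ineq1_le a); nra. }
    assert (exp (a + a) <= exp (6 * a + 9)).
    { left; apply exp_increasing; lra. }
    nra. }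
  replace (/ a - / (a + g)) with (g / (a * (a + g))) by (field; lra).
  eapply Rle_trans; [exact Hshift|].
  unfold Rdiv; apply Rmult_le_compat_l; [lra|].
  rewrite exp_Ropp; apply Rinv_le_contravar; [nra | exact Hexp].
Qed.

Theorem theorem3p3 :
  exists (lam : nat -> R) (f : R -> R),
    dgad_set lam /\ C0plus f /\
    (forall x, 0 <= x <= 1 -> div_set f lam x) /\
    (forall x, 4 <= x <= 5 -> conv_set f lam x).
Proof.
  set (lam := orbit gauss 1).
  assert (gauss_antimono : forall s t, 1 <= s <= t -> gauss t <= gauss s)
    by (intros s t Hst; apply gauss_le; nra).
  assert (lam_ge1 : forall n, 1 <= lam n) by (intro n; apply orbit_ge; exact gauss_pos).
  exists lam, (fun t => gauss (t - 1)).
  split; [|split; [|split]].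
  - apply dgad_orbit; [exact gauss_pos | exact gauss_antimono | lra |].
    exact gauss_lt_eventually.
  - apply C0plus_gauss_shift.
  - intros x Hx.
    apply not_summable_of_telescoping_minorant with (u := lam).
    + intro n; unfold lam; rewrite orbit_gap.
      apply gauss_le_shift; [exact Hx | apply lam_ge1].
    + apply orbit_unbounded; [exact gauss_pos | exact gauss_antimono].
  - intros y Hy.
    apply summable_of_telescoping_majorant with (u := fun n => / lam n) (m := 0).
    + intro n; left; apply gauss_pos.
    + intro n; apply gauss_shift_le_inv_gap; [lra | apply lam_ge1].
    + intro n; left; apply Rinv_0_lt_compat; specialize (lam_ge1 n); lra.
Qed.
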